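(* Let $(S,\rightarrow)$ be a PNTS, $X$ a variable and $\rho$ an interpretation. Then for every $s\in S$: (i) $\llbracket\mathbb P_{>0}(\Diamond X)\rrbracket_\rho(s)=1$ iff there exists $t\in S$ with $s\rightsquigarrow t$ and $\rho(X)(t)>0$; (ii) $\llbracket\mathbb P_{=1}(\Box X)\rrbracket_\rho(s)=1$ iff for all $t\in S$, $s\rightsquigarrow t$ implies $\rho(X)(t)=1$.
   Context: A PNTS is $(S,\rightarrow)$ with $\rightarrow\subseteq S\times\mathcal D(S)$, $\mathcal D(S)$ the probability distributions $d:S\to[0,1]$ with $\sum_sd(s)=1$. $s\rightsquigarrow t$ iff there is $d$ with $s\to d$ and $d(t)>0$. An interpretation $\rho$ assigns functions $S\to[0,1]$ to variables. Semantics: $\llbracket X\rrbracket_\rho=\rho(X)$, $\llbracket\Diamond\phi\rrbracket_\rho(x)=\sup_{x\to d}\sum_yd(y)\llbracket\phi\rrbracket_\rho(y)$ (empty sup $=0$), $\llbracket\Box\phi\rrbracket_\rho(x)=\inf_{x\to d}\sum_yd(y)\llbracket\phi\rrbracket_\rho(y)$ (empty inf $=1$), $\oplus$ and $\odot$ pointwise $\min(1,a+b)$ and $\max(0,a+b-1)$, and $\mu Y.\phi$, $\nu Y.\phi$ least/greatest fixed points of $f\mapsto\llbracket\phi\rrbracket_{\rho[f/Y]}$. $\mathbb P_{>0}\phi=\mu Y.(Y\oplus\phi)$ and $\mathbb P_{=1}\phi=\nu Y.(Y\odot\phi)$ with $Y$ not occurring in $\phi$. *)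

From HB Require Import structures.
From mathcomp Require Import all_boot all_order all_algebra.
From mathcomp Require Import all_classical all_reals.
From mathcomp Require Import ereal esum.

Set Implicit Arguments.
Unset Strict Implicit.
Unset Printing Implicit Defensive.
Import Order.TTheory GRing.Theory Num.Theory.
Local Open Scope classical_set_scope.
Local Open Scope ring_scope.

Section PNTS.
Variable R : realType.
Variable S : Type.

Definition is_distr (d : S -> R) : Prop :=
  (forall s, 0 <= d s <= 1) /\ (\esum_(s in [set: {classic S}]) (d s)%:E = 1)%E.

Definition is_PNTS (trans : S -> (S -> R) -> Prop) : Prop :=
  forall s d, trans s d -> is_distr d.

Definition reach (trans : S -> (S -> R) -> Prop) (s t : S) : Prop :=
  exists d, trans s d /\ 0 < d t.

Definition unitfun (f : S -> R) : Prop := forall s, 0 <= f s <= 1.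

Definition expect (d f : S -> R) : R :=
  fine (\esum_(y in [set: {classic S}]) (d y * f y)%:E)%E.

Definition sup0 (A : set R) : R := if A == set0 then 0 else sup A.
Definition inf1 (A : set R) : R := if A == set0 then 1 else inf A.

(* least / greatest fixed points in the complete lattice [0,1]^S
   (Knaster-Tarski: meet of prefixed points / join of postfixed points) *)
Definition lfp (F : (S -> R) -> (S -> R)) : S -> R :=
  fun s => inf [set g s | g in [set g | unitfun g /\ forall t, F g t <= g t]].
Definition gfp (F : (S -> R) -> (S -> R)) : S -> R :=
  fun s => sup [set g s | g in [set g | unitfun g /\ forall t, g t <= F g t]].

End PNTS.

Inductive form (V : Type) : Type :=
| FVar of V
| FDia of form V
| FBox of form V
| FOplus of form V & form V
| FOdot of form V & form V
| FMu of V & form V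
| FNu of V & form V.

Definition upd (V : eqType) (T : Type) (rho : V -> T) (Y : V) (f : T) : V -> T :=
  fun Z => if Z == Y then f else rho Z.

Fixpoint sem (R : realType) (S : Type) (trans : S -> (S -> R) -> Prop)
  (V : eqType) (phi : form V) (rho : V -> S -> R) : S -> R :=
  match phi with
  | FVar X => rho X
  | FDia p => fun x =>
      sup0 [set expect d (sem trans p rho) | d in [set d | trans x d]]
  | FBox p => fun x =>
      inf1 [set expect d (sem trans p rho) | d in [set d | trans x d]]
  | FOplus p q => fun x => Num.min 1 (sem trans p rho x + sem trans q rho x)
  | FOdot p q => fun x => Num.max 0 (sem trans p rho x + sem trans q rho x - 1)
  | FMu Y p => lfp (fun f => sem trans p (upd rho Y f))
  | FNu Y p => gfp (fun f => sem trans p (upd rho Y f))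
  end.

(* P_{>0} phi = mu Y.(Y (+) phi), P_{=1} phi = nu Y.(Y (.) phi), Y not in phi *)
Definition PPos (V : Type) (Y : V) (phi : form V) : form V :=
  FMu Y (FOplus (FVar Y) phi).
Definition POne (V : Type) (Y : V) (phi : form V) : form V :=
  FNu Y (FOdot (FVar Y) phi).

From Pilot Require Import Defs.
From HB Require Import structures.
From mathcomp Require Import all_boot all_order all_algebra.
From mathcomp Require Import all_classical all_reals.
From mathcomp Require Import ereal esum.
Import Order.TTheory GRing.Theory Num.Theory.

(* Both fixed points are computed in closed form.  The operator
   g |-> min 1 (g + a) has the prefixed point [a > 0], and any prefixed point
   g with values in [0,1] satisfies g s = 1 wherever a s > 0; so its least
   fixed point is the indicator of [a > 0].  Dually the greatest fixed point
   of g |-> max 0 (g + b - 1) is the indicator of [b >= 1].  For a = the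
   Diamond of rho X, a s > 0 iff some successor distribution gives positive
   mass to a state where rho X is positive; for b = the Box of rho X, b s >= 1
   iff every successor distribution is concentrated on states where
   rho X = 1. *)

Set Implicit Arguments.
Unset Strict Implicit.
Unset Printing Implicit Defensive.
Local Open Scope classical_set_scope.
Local Open Scope ring_scope.

Lemma esum_ge_point (R : realType) (T : choiceType) (a : T -> \bar R) t :
  (a t <= \esum_(y in [set: T]) a y)%E.
Proof.
apply: esum_ge; exists [set t]; first by split; [exact: finite_set1|].
by rewrite fsbig_set1.
Qed.

Lemma unitfun_compl (R : realType) (S : Type) (f : S -> R) :
  unitfun f -> unitfun (fun y => 1 - f y).
Proof.
by move=> f01 y; case/andP: (f01 y) => *; rewrite subr_ge0 lerBlDr lerDl andbC.
Qed.

Section Expectation.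
Variables (R : realType) (S : Type) (d : S -> R).
Hypothesis d_distr : is_distr d.

Let d01 : unitfun d. Proof. by case: d_distr. Qed.

Let dmul_ge0 (f : S -> R) y : unitfun f -> (0 <= (d y * f y)%:E)%E.
Proof.
by move=> f01; rewrite lee_fin; case/andP: (d01 y); case/andP: (f01 y) => *;
  rewrite mulr_ge0.
Qed.

Lemma esum_dmul_itv (f : S -> R) : unitfun f ->
  (0 <= \esum_(y in [set: {classic S}]) (d y * f y)%:E <= 1)%E.
Proof.
move=> f01; rewrite esum_ge0 => [|y _]; last exact: dmul_ge0.
case: d_distr => _ <-; apply: le_esum => y _; rewrite lee_fin.
by case/andP: (d01 y) => ? _; case/andP: (f01 y) => ? ?; rewrite ler_piMr.
Qed.

Lemma EFin_expect (f : S -> R) : unitfun f ->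
  (\esum_(y in [set: {classic S}]) (d y * f y)%:E)%E = (expect d f)%:E.
Proof.
move=> /esum_dmul_itv /andP[ge0 le1].
by rewrite /expect fineK // ge0_fin_numE // (le_lt_trans le1) ?ltry.
Qed.

Lemma expect_itv (f : S -> R) : unitfun f -> 0 <= expect d f <= 1.
Proof. by move=> f01; have := esum_dmul_itv f01; rewrite EFin_expect. Qed.

Lemma expect_gt0P (f : S -> R) : unitfun f ->
  0 < expect d f <-> exists t, 0 < d t /\ 0 < f t.
Proof.
move=> f01; split; last first.
  move=> [t [dt ft]]; rewrite -lte_fin -EFin_expect //.
  apply: lt_le_trans (esum_ge_point (fun y : {classic S} => (d y * f y)%:E) t).
  by rewrite lte_fin mulr_gt0.
apply: contraPP => no_t.
have -> : expect d f = 0.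
  rewrite /expect esum1 // => y _; congr (_%:E).
  have [-> | dy_neq0] := eqVneq (d y) 0; first by rewrite mul0r.
  have [-> | fy_neq0] := eqVneq (f y) 0; first by rewrite mulr0.
  case/andP: (d01 y) => dy _; case/andP: (f01 y) => fy _.
  by exfalso; apply: no_t; exists y; rewrite !lt0r dy_neq0 fy_neq0 dy fy.
by rewrite ltxx.
Qed.

Lemma expectD_compl (f : S -> R) : unitfun f ->
  expect d f + expect d (fun y => 1 - f y) = 1.
Proof.
move=> f01.
have f'01 := unitfun_compl f01.
apply: EFin_inj; rewrite EFinD -!EFin_expect // -esumD => [|y _|y _];
  [|exact: dmul_ge0 y f01|exact: dmul_ge0 y f'01].
case: d_distr => _ <-; apply: eq_esum => y _.
by rewrite -EFinD -mulrDr addrC subrK mulr1.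
Qed.

Lemma expect_ge1P (f : S -> R) : unitfun f ->
  1 <= expect d f <-> forall t, 0 < d t -> f t = 1.
Proof.
move=> f01.
have f'01 := unitfun_compl f01.
rewrite -[X in X <= _](expectD_compl f01) gerDl leNgt.
split=> [/negP compl0 t dt | f1].
  case/andP: (f01 t) => _; rewrite le_eqVlt => /orP[/eqP //|ft1].
  by exfalso; apply: compl0; apply/(expect_gt0P f'01); exists t;
    rewrite subr_gt0.
apply/negP => /(expect_gt0P f'01) [t [dt]].
by rewrite f1 // subrr ltxx.
Qed.

End Expectation.

Section UnitSupInf.
Variables (R : realType) (A : set R).
Hypothesis A01 : forall e, A e -> 0 <= e <= 1.

Lemma sup0_gt0P : 0 < Defs.sup0 A <-> exists2 e, A e & 0 < e.
Proof.
rewrite /Defs.sup0; case: eqP => [-> | /eqP/set0P A0].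
  by rewrite ltxx; split=> // -[].
have supA : has_sup A by split=> //; exists 1 => e /A01 /andP[].
split=> [sup_gt0 | [e Ae e_gt0]].
  by have [e Ae] := sup_adherent sup_gt0 supA; rewrite subrr; exists e.
exact: lt_le_trans e_gt0 (sup_upper_bound supA Ae).
Qed.

Lemma inf1_ge1P : 1 <= Defs.inf1 A <-> forall e, A e -> 1 <= e.
Proof.
rewrite /Defs.inf1; case: eqP => [-> | /eqP/set0P A0]; first by rewrite lexx.
have infA : has_lbound A by exists 0 => e /A01 /andP[].
split=> [inf_ge1 e Ae | ge1]; last exact: lb_le_inf.
exact: le_trans inf_ge1 (ge_inf infA Ae).
Qed.

End UnitSupInf.

Section FixedPoints.
Variables (R : realType) (S : Type) (F : (S -> R) -> S -> R).

Definition prefixed (g : S -> R) := unitfun g /\ forall t, F g t <= g t.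
Definition postfixed (g : S -> R) := unitfun g /\ forall t, g t <= F g t.

Lemma lfp_le g s : prefixed g -> lfp F s <= g s.
Proof.
move=> pre_g; apply: ge_inf; last by exists g.
by exists 0 => _ [h [h01 _] <-]; case/andP: (h01 s).
Qed.

Lemma le_lfp c s : (exists g, prefixed g) ->
  (forall g, prefixed g -> c <= g s) -> c <= lfp F s.
Proof.
move=> [g pre_g] c_le; apply: lb_le_inf; first by exists (g s), g.
by move=> _ [h pre_h <-]; exact: c_le.
Qed.

Lemma gfp_ge g s : postfixed g -> g s <= gfp F s.
Proof.
move=> post_g; apply: sup_upper_bound; last by exists g.
split; first by exists (g s), g.
by exists 1 => _ [h [h01 _] <-]; case/andP: (h01 s).
Qed.

Lemma gfp_le c s : (exists g, postfixed g) ->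
  (forall g, postfixed g -> g s <= c) -> gfp F s <= c.
Proof.
move=> [g post_g] le_c; apply: ge_sup; first by exists (g s), g.
by move=> _ [h post_h <-]; exact: le_c.
Qed.

End FixedPoints.

Section ClosedFormFixedPoints.
Variables (R : realType) (S : Type).

Definition indic (P : S -> bool) : S -> R := fun x => if P x then 1 else 0.

Lemma unitfun_indic P : unitfun (indic P).
Proof. by move=> x; rewrite /indic; case: (P x); rewrite ?lexx ?ler01. Qed.

Lemma lfp_min1_addE (a : S -> R) s :
  lfp (fun g x => Num.min 1 (g x + a x)) s = 1 <-> 0 < a s.
Proof.
set F := fun g x => _.
have pre1 : prefixed F (fun=> 1).
  by split=> [x|x]; rewrite ?ge_min ?lexx ?ler01.
split=> [lfp1 | a_gt0].
  apply: contraPP lfp1 => /negP a_le0; apply/eqP; rewrite lt_eqF //.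
  apply: (le_lt_trans (lfp_le s (g := indic (fun x => 0 < a x)) _)).
    split=> [|x]; first exact: unitfun_indic.
    rewrite /F /indic; case: ifPn => ax; first by rewrite ge_min lexx.
    by rewrite add0r ge_min [a x <= 0]leNgt ax orbT.
  by rewrite /indic (negbTE a_le0) ltr01.
apply/eqP; rewrite eq_le lfp_le //=; apply/le_lfp; first by exists (fun=> 1).
move=> g [g01 pre_g]; rewrite leNgt; apply/negP => gs_lt1.
by have := pre_g s; rewrite /F leNgt lt_min gs_lt1 ltrDl a_gt0.
Qed.

Lemma gfp_max0_addE (b : S -> R) s :
  gfp (fun g x => Num.max 0 (g x + b x - 1)) s = 1 <-> 1 <= b s.
Proof.
set F := fun g x => _.
have post0 : postfixed F (fun=> 0).
  by split=> [x|x]; rewrite ?le_max ?lexx ?ler01.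
split=> [gfp1 | b_ge1].
  apply: contraPP gfp1 => /negP; rewrite -ltNge => b_lt1.
  apply/eqP; rewrite lt_eqF //; apply: le_lt_trans ltr01.
  apply/gfp_le; first by exists (fun=> 0).
  move=> g [g01 post_g]; rewrite leNgt; apply/negP => gs_gt0.
  by have := post_g s; rewrite /F leNgt gt_max gs_gt0 ltrBlDr ltrD2l b_lt1.
apply/eqP; rewrite eq_le; apply/andP; split.
  by apply/gfp_le; [exists (fun=> 0) | move=> g [g01 _]; case/andP: (g01 s)].
apply: (le_trans _ (gfp_ge s (g := indic (fun x => 1 <= b x)) _)).
  by rewrite /indic b_ge1.
split=> [|x]; first exact: unitfun_indic.
rewrite /F /indic; case: ifPn => bx; last by rewrite le_max lexx.
by rewrite le_max addrC addKr bx orbT.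
Qed.

End ClosedFormFixedPoints.

Section Semantics.
Variables (R : realType) (S : Type) (trans : S -> (S -> R) -> Prop).
Variables (V : eqType) (rho : V -> S -> R) (X Y : V).
Hypothesis pnts : is_PNTS trans.
Hypothesis rho01 : forall Z, unitfun (rho Z).

Let expect_trans_itv x e :
  [set expect d (rho X) | d in [set d | trans x d]] e -> 0 <= e <= 1.
Proof. by case=> d /pnts d_distr <-; exact: expect_itv. Qed.

Lemma sem_Dia_var_gt0P s :
  0 < sem trans (FDia (FVar X)) rho s <-> exists t, reach trans s t /\ 0 < rho X t.
Proof.
rewrite /= (sup0_gt0P (@expect_trans_itv s)).
split=> [[_ [d dtr <-]] | [t [[d [dtr dt]] Xt]]].
  by move/(expect_gt0P (pnts dtr) (rho01 X)) => [t [dt Xt]]; exists t;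
    split=> //; exists d.
exists (expect d (rho X)); first by exists d.
by apply/(expect_gt0P (pnts dtr) (rho01 X)); exists t.
Qed.

Lemma sem_Box_var_ge1P s :
  1 <= sem trans (FBox (FVar X)) rho s <-> forall t, reach trans s t -> rho X t = 1.
Proof.
rewrite /= (inf1_ge1P (@expect_trans_itv s)).
split=> [ge1 t [d [dtr dt]] | X1 _ [d dtr <-]].
  by apply: (expect_ge1P (pnts dtr) (rho01 X)).1 dt; apply: ge1; exists d.
by apply/(expect_ge1P (pnts dtr) (rho01 X)) => t dt; apply: X1; exists d.
Qed.

Hypothesis YX : Y != X.

Lemma sem_PPos_Dia_var : sem trans (PPos Y (FDia (FVar X))) rho =
  lfp (fun g x => Num.min 1 (g x + sem trans (FDia (FVar X)) rho x)).
Proof. by rewrite /= /upd eqxx eq_sym (negbTE YX). Qed.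

Lemma sem_POne_Box_var : sem trans (POne Y (FBox (FVar X))) rho =
  gfp (fun g x => Num.max 0 (g x + sem trans (FBox (FVar X)) rho x - 1)).
Proof. by rewrite /= /upd eqxx eq_sym (negbTE YX). Qed.

End Semantics.

Unset Implicit Arguments.
Close Scope classical_set_scope.

Theorem mainTheorem10 (R : realType) (S : Type)
  (trans : S -> (S -> R) -> Prop) (V : eqType) (X Y : V)
  (rho : V -> S -> R) :
  is_PNTS trans ->
  (forall Z, unitfun (rho Z)) ->
  Y != X ->
  forall s : S,
    (sem trans (PPos Y (FDia (FVar X))) rho s = 1 <->
       exists t, reach trans s t /\ 0 < rho X t) /\
    (sem trans (POne Y (FBox (FVar X))) rho s = 1 <->
       forall t, reach trans s t -> rho X t = 1).
Proof.
move=> pnts rho01 YX s; split.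
  by rewrite sem_PPos_Dia_var // lfp_min1_addE sem_Dia_var_gt0P.
by rewrite sem_POne_Box_var // gfp_max0_addE sem_Box_var_ge1P.
Qed.
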